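(* Let $X$ be a geodesic $\delta$--hyperbolic space ($\delta\geqslant0$) on which a group $G$ acts by isometries, let $U\subset G$ be finite, let $x_0\in X$ satisfy $\frac1{|U|}\sum_{u\in U}|ux_0-x_0|\leqslant E(U)+\delta$, and let $d$ be either $1$ or $\log_2(2|U|)$. Let $y_0,z_0,y_1,z_1\in S(x_0,1000d\delta)$ with $|z_0-y_1|>6d\delta$ and $|y_0-z_1|>6d\delta$. Then for all $u_0\in U_{y_0,z_0}$ and $u_1\in U_{y_1,z_1}$, $$(u_0^{-1}x_0,u_1x_0)_{x_0}\leqslant1000d\delta\quad\text{and}\quad(u_0x_0,u_1^{-1}x_0)_{x_0}\leqslant1000d\delta.$$
   Context: Distance $|x-y|$; Gromov product $(p,q)_x=\frac12(|p-x|+|q-x|-|p-q|)$; $X$ is $\delta$--hyperbolic if $(p,r)_x\geqslant\min\{(p,q)_x,(q,r)_x\}-\delta$ for all $p,q,r,x$. $E(U):=\inf_{x\in X}\frac1{|U|}\sum_{u\in U}|ux-x|$. $S(x_0,R)$ is the sphere $\{x\mid|x-x_0|=R\}$. For $y,z\in S(x_0,1000d\delta)$, $U_{y,z}:=\{u\in U\mid |ux_0-x_0|\geqslant4000d\delta,\ (x_0,ux_0)_y\leqslant d\delta,\ (x_0,u^{-1}x_0)_z\leqslant d\delta\}$. *)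

From HB Require Import structures.
From mathcomp Require Import all_boot all_order all_algebra.
From mathcomp Require Import finmap.
From mathcomp Require Import all_classical all_reals all_analysis.

Set Implicit Arguments.
Unset Strict Implicit.
Unset Printing Implicit Defensive.

Import Order.TTheory GRing.Theory Num.Theory.
Local Open Scope ring_scope.
Local Open Scope classical_set_scope.


Section Defs.
Variables (R : realType) (X : Type).
Variable dist : X -> X -> R.

Definition is_metric : Prop :=
  (forall x y, dist x y = 0 <-> x = y) /\
  (forall x y, dist x y = dist y x) /\
  (forall x y z, dist x z <= dist x y + dist y z).

Definition geodesic_space : Prop :=
  forall x y : X, exists g : R -> X,
    g 0 = x /\ g (dist x y) = y /\
    forall s t, 0 <= s <= dist x y -> 0 <= t <= dist x y ->
      dist (g s) (g t) = `|s - t|.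

Definition gromov (p q x : X) : R :=
  (dist p x + dist q x - dist p q) / 2.

Definition hyperbolic (delta : R) : Prop :=
  forall p q r x : X,
    Num.min (gromov p q x) (gromov q r x) - delta <= gromov p r x.

Definition sphere (x0 : X) (r : R) : set X := [set x | dist x x0 = r].

Variable G : groupType.
Variable act : G -> X -> X.

Definition isometric_action : Prop :=
  (forall x, act 1%g x = x) /\
  (forall g h x, act (g * h)%g x = act g (act h x)) /\
  (forall g x y, dist (act g x) (act g y) = dist x y).

Definition avg_disp (U : {fset G}) (x : X) : R :=
  (\sum_(u <- U) dist (act u x) x) / ((#|` U|)%fset%:R).

Definition energy (U : {fset G}) : R := inf (range (avg_disp U)).

Definition U_yz (U : {fset G}) (x0 : X) (d delta : R) (y z : X) : set G :=
  [set u | u \in U /\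
           4000 * d * delta <= dist (act u x0) x0 /\
           gromov x0 (act u x0) y <= d * delta /\
           gromov x0 (act (u^-1)%g x0) z <= d * delta].

End Defs.

(* Since |p - x0| = r, the bound (x0, a)_p <= D is the same as (p, a)_x0 >= r - D.
   If (a, b)_x0 were also at least r - D, two applications of delta-hyperbolicity
   along p, a, b, q would give (p, q)_x0 >= r - D - 2 delta, i.e.
   |p - q| <= 2D + 4 delta; with D = d delta, r = 1000 d delta and d >= 1 this
   contradicts |p - q| > 6 d delta. *)
From HB Require Import structures.
From mathcomp Require Import all_boot all_order all_algebra.
From mathcomp Require Import finmap.
From mathcomp Require Import all_classical all_reals all_analysis.
From mathcomp Require Import lra.

Set Implicit Arguments.
Unset Strict Implicit.
Unset Printing Implicit Defensive.

Import Order.TTheory GRing.Theory Num.Theory.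
Local Open Scope ring_scope.
Local Open Scope classical_set_scope.

Section GromovProduct.
Variables (R : realType) (X : Type) (dist : X -> X -> R).
Hypothesis distC : forall x y, dist x y = dist y x.

Lemma gromovC (p q x : X) : gromov dist p q x = gromov dist q p x.
Proof. by rewrite /gromov (distC p q) [dist p x + _]addrC. Qed.

Lemma gromov_add_swap (p a x : X) :
  gromov dist p a x + gromov dist x a p = dist p x.
Proof. by rewrite /gromov (distC x p) (distC a x) (distC a p); lra. Qed.

Lemma dist_gromov (p q x : X) :
  dist p q = dist p x + dist q x - 2 * gromov dist p q x.
Proof. by rewrite /gromov; lra. Qed.

Variable delta : R.
Hypothesis delta_ge0 : 0 <= delta.
Hypothesis hyp : hyperbolic dist delta.

Lemma hyperbolic_chain (c : R) (p a b q x : X) :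
  c <= gromov dist p a x -> c <= gromov dist a b x -> c <= gromov dist b q x ->
  c - 2 * delta <= gromov dist p q x.
Proof.
move: (hyp p a b x) (hyp p b q x) delta_ge0; rewrite !lerBlDr !ge_min.
by case/orP=> ? /orP[] ? ? ? ? ?; lra.
Qed.

Lemma gromov_lt_of_far_shadows (r D : R) (x a b p q : X) :
  dist p x = r -> dist q x = r ->
  gromov dist x a p <= D -> gromov dist x b q <= D ->
  2 * D + 4 * delta < dist p q ->
  gromov dist a b x < r - D.
Proof.
move=> px qx xap xbq far; rewrite ltNge; apply/negP => abx.
have pax : r - D <= gromov dist p a x.
  by have := gromov_add_swap p a x; rewrite px; lra.
have qbx : r - D <= gromov dist b q x.
  by have := gromov_add_swap q b x; rewrite qx gromovC; lra.
have pqx := hyperbolic_chain pax abx qbx.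
by have := dist_gromov p q x; rewrite px qx; lra.
Qed.

End GromovProduct.

Lemma ln_double_div_ln2_ge1 (R : realType) (n : nat) : (0 < n)%N ->
  1 <= ln (2 * n%:R : R) / ln 2.
Proof.
move=> n_gt0.
have ln2_gt0 : 0 < ln (2 : R) by apply: ln_gt0; lra.
rewrite lnM ?posrE ?ltr0n // mulrDl divff ?gt_eqF // lerDl.
by apply: divr_ge0; [apply: ln_ge0; rewrite ler1n | exact: ltW].
Qed.

Theorem lemma6p1 (R : realType) (X : Type) (dist : X -> X -> R)
  (delta : R) (G : groupType) (act : G -> X -> X)
  (U : {fset G}) (x0 : X) (d : R)
  (y0 z0 y1 z1 : X) (u0 u1 : G) :
  is_metric dist -> geodesic_space dist -> 0 <= delta -> hyperbolic dist delta ->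
  isometric_action dist act ->
  avg_disp dist act U x0 <= energy dist act U + delta ->
  (d = 1 \/ d = ln (2 * ((#|` U|)%fset%:R)) / ln 2) ->
  sphere dist x0 (1000 * d * delta) y0 ->
  sphere dist x0 (1000 * d * delta) z0 ->
  sphere dist x0 (1000 * d * delta) y1 ->
  sphere dist x0 (1000 * d * delta) z1 ->
  6 * d * delta < dist z0 y1 ->
  6 * d * delta < dist y0 z1 ->
  U_yz dist act U x0 d delta y0 z0 u0 ->
  U_yz dist act U x0 d delta y1 z1 u1 ->
  gromov dist (act (u0^-1)%g x0) (act u1 x0) x0 <= 1000 * d * delta /\
  gromov dist (act u0 x0) (act (u1^-1)%g x0) x0 <= 1000 * d * delta.
Proof.
move=> [_ [distC _]] _ delta_ge0 hyp _ _ d_def y0S z0S y1S z1S far01 far10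
  [u0U [_ [u0y0 u0z0]]] [_ [_ [u1y1 u1z1]]].
have d_ge1 : 1 <= d.
  case: d_def => [-> // | ->]; apply: ln_double_div_ln2_ge1.
  by rewrite cardfs_gt0; apply/fset0Pn; exists u0.
have delta_le : delta <= d * delta by rewrite -{1}[delta]mul1r ler_wpM2r.
have shadow_bound (a b p q : X) :
    dist p x0 = 1000 * d * delta -> dist q x0 = 1000 * d * delta ->
    gromov dist x0 a p <= d * delta -> gromov dist x0 b q <= d * delta ->
    6 * d * delta < dist p q -> gromov dist a b x0 <= 1000 * d * delta.
  move=> px qx xap xbq far.
  have far' : 2 * (d * delta) + 4 * delta < dist p q by lra.
  have := gromov_lt_of_far_shadows distC delta_ge0 hyp px qx xap xbq far'.
  by lra.
rewrite /sphere /= in y0S z0S y1S z1S.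
by split; [exact: shadow_bound _ _ _ _ z0S y1S u0z0 u1y1 far01
          | exact: shadow_bound _ _ _ _ y0S z1S u0y0 u1z1 far10].
Qed.
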